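(* Let $0<q<1$, $s\ge2$, $\alpha\in\mathbb{R}\setminus\mathbb{Z}_-$. For $j=1,\dots,s-1$ let $a_j>0$, $c_j>0$ be real and $b_j,d_j\in\mathbb{C}$ such that $a_jn+\mathrm{Re}(b_j)\notin\mathbb{Z}_-$ and $c_jn+\mathrm{Re}(d_j)\notin\mathbb{Z}_-$ for all positive integers $n$. Put $A=\dfrac{[a_1]_q\cdots[a_{s-1}]_q}{[c_1]_q\cdots[c_{s-1}]_q}$ and $$\lambda_n=\frac{q^{n+\alpha}\,[n]_{q^{c_1}}\cdots[n]_{q^{c_{s-1}}}}{[n]_q\,[n]_{q^{a_1}}\cdots[n]_{q^{a_{s-1}}}}(q-1).$$ Then, uniformly on compact subsets of $\mathbb{C}$, $$\lim_{n\to+\infty}{}_s\phi_s\!\left(\begin{array}{c}q^{-n},q^{a_1n+b_1},\dots,q^{a_{s-1}n+b_{s-1}}\\ q^{\alpha},q^{c_1n+d_1},\dots,q^{c_{s-1}n+d_{s-1}}\end{array};q,\lambda_n z\right)={}_0\phi_1\!\left(\begin{array}{c}-\\ q^{\alpha}\end{array};q,-Az(q-1)^2q^{\alpha}\right)=(Az)^{\frac{1-\alpha}{2}}\,\Gamma_q(\alpha)\,J^{(2)}_{\alpha-1}\!\left(2(1-q)\sqrt{Az};q\right).$$ For $s=1$ one has, uniformly on compact subsets of $\mathbb{C}$, $$\lim_{n\to+\infty}{}_1\phi_1\!\left(\begin{array}{c}q^{-n}\\ q^{\alpha}\end{array};q,\frac{q^{n+\alpha}}{[n]_q}(q-1)z\right)={}_0\phi_1\!\left(\begin{array}{c}-\\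 q^{\alpha}\end{array};q,-z(q-1)^2q^{\alpha}\right)=z^{\frac{1-\alpha}{2}}\Gamma_q(\alpha)J^{(2)}_{\alpha-1}\!\left(2(1-q)\sqrt z;q\right).$$ (Powers and square roots in the last expressions are taken with principal branches, and the product $(Az)^{\frac{1-\alpha}{2}}J^{(2)}_{\alpha-1}(\cdot)$ is understood as the entire function given by the ${}_0\phi_1$ expression.)
   Context: $\mathbb{Z}_-=\{0,-1,-2,\dots\}$. For $w\in\mathbb{C}$, $q^{w}:=e^{w\ln q}$. For $a\in\mathbb{C}$: $(a;q)_0=1$, $(a;q)_k=\prod_{j=0}^{k-1}(1-aq^{j})$, $(a;q)_\infty=\prod_{j\ge0}(1-aq^{j})$, and $(a_1,\dots,a_r;q)_k=\prod_{i=1}^r(a_i;q)_k$. The $q$-number is $[z]_q=\dfrac{1-q^{z}}{1-q}$, and $[n]_{q^{a}}=\dfrac{1-q^{an}}{1-q^{a}}$. The basic hypergeometric series is $${}_r\phi_s\!\left(\begin{array}{c}a_1,\dots,a_r\\ b_1,\dots,b_s\end{array};q,z\right)=\sum_{k=0}^{\infty}\frac{(a_1,\dots,a_r;q)_k}{(b_1,\dots,b_s;q)_k}(-1)^{(1+s-r)k}q^{(1+s-r)\binom{k}{2}}\frac{z^k}{(q;q)_k};$$ when one numerator parameter is $q^{-n}$ it is a polynomial in $z$ of degree at most $n$; ''$-$'' denotes an empty parameter list. The $q$-Gamma function is $\Gamma_q(z)=\dfrac{(q;q)_\infty}{(q^{z};q)_\infty}(1-q)^{1-z}$. The $q$-Bessel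 function is $J^{(2)}_{\nu}(x;q)=\dfrac{(q^{\nu+1};q)_\infty}{(q;q)_\infty}\left(\dfrac{x}{2}\right)^{\nu}{}_0\phi_1\!\left(\begin{array}{c}-\\ q^{\nu+1}\end{array};q,-\dfrac{q^{\nu+1}x^2}{4}\right)$. *)

From Stdlib Require Import Reals.
From Coquelicot Require Import Coquelicot.
Open Scope R_scope.

Definition C_lim (u : nat -> C) : C := @lim (CompleteNormedModule.CompleteSpace _ C_CompleteNormedModule) (filtermap u eventually).
Definition C_series (u : nat -> C) : C := C_lim (sum_n u).

Definition cexp (z : C) : C :=
  (exp (Re z) * cos (Im z), exp (Re z) * sin (Im z)).

Definition qpow (q : R) (w : C) : C := cexp (w * RtoC (ln q))%C.

Fixpoint prodR (f : nat -> R) (m : nat) : R :=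
  match m with O => 1 | S k => prodR f k * f k end.
Fixpoint prodC (f : nat -> C) (m : nat) : C :=
  match m with O => RtoC 1 | S k => (prodC f k * f k)%C end.

Definition qpoch (a : C) (q : R) (k : nat) : C :=
  prodC (fun j => (RtoC 1 - a * RtoC (q ^ j))%C) k.
Definition qpoch_inf (a : C) (q : R) : C := C_lim (qpoch a q).

(* q-number [x]_q = (1 - q^x)/(1-q), x real; [n]_{q^a} = qnum (Rpower q a) n *)
Definition qnum (q x : R) : R := (1 - Rpower q x) / (1 - q).

Definition phi_term (r s : nat) (num den : nat -> C) (q : R) (z : C) (k : nat) : C :=
  (prodC (fun i => qpoch (num i) q k) r / prodC (fun i => qpoch (den i) q k) s
   * RtoC (powerRZ ((-1) ^ k * q ^ (Nat.div (k * (k - 1)) 2))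
             (1 + Z.of_nat s - Z.of_nat r)%Z)
   * z ^ k / qpoch (RtoC q) q k)%C.

Definition rphis (r s : nat) (num den : nat -> C) (q : R) (z : C) : C :=
  C_series (phi_term r s num den q z).

(* principal argument in (-pi, pi] *)
Definition Carg (w : C) : R :=
  let x := Re w in let y := Im w in
  if Rlt_dec 0 x then atan (y / x)
  else if Rlt_dec x 0 then
    (if Rle_dec 0 y then atan (y / x) + PI else atan (y / x) - PI)
  else if Rlt_dec 0 y then PI / 2
  else if Rlt_dec y 0 then - (PI / 2) else 0.

(* principal logarithm and principal power w^c = e^{c Log w} (w <> 0);
   by convention 0^c := 0 *)
Definition Clog (w : C) : C := (ln (Cmod w), Carg w).
Definition Cppow (w c : C) : C :=
  if Ceq_dec w 0 then 0%C else cexp (c * Clog w)%C.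
Definition Csqrt (w : C) : C := Cppow w (RtoC (1 / 2)).

Definition Gamma_q (q : R) (z : C) : C :=
  (qpoch_inf (RtoC q) q / qpoch_inf (qpow q z) q * qpow (1 - q) (RtoC 1 - z))%C.

Definition Jq2 (nu : C) (x : C) (q : R) : C :=
  (qpoch_inf (qpow q (nu + RtoC 1)) q / qpoch_inf (RtoC q) q
   * Cppow (x / RtoC 2) nu
   * rphis 0 1 (fun _ => 0%C) (fun _ => qpow q (nu + RtoC 1)) q
       (- qpow q (nu + RtoC 1) * x ^ 2 / RtoC 4))%C.

(** For fixed [n] the [s phi s] series terminates, since [(q^-n; q)_k = 0] for
    [k > n].  Write [lambda_n = q^n L_n], where [L_n -> mu = -A (q-1)^2 q^alpha].
    Then [(q^-n; q)_k lambda_n^k = prod_(j<k) L_n (q^n - q^j)], so the [k]-th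
    term tends to [mu^k q^(k(k-1)) z^k / ((q^alpha; q)_k (q; q)_k)], the [k]-th
    term of the [0 phi 1] series at [mu z]; the remaining q-Pochhammer symbols
    tend to [1] because [q^(a_j n + b_j)] and [q^(c_j n + d_j)] tend to [0].
    The same product bounds the [k]-th term by [prod_(j<k) q^j K <= C 2^-k],
    uniformly in [n] and in [z] on a disk, and Tannery's theorem gives uniform
    convergence.  The Bessel form is an identity of principal branches:
    [(Az)^((1-alpha)/2) (1-q)^(1-alpha) ((1-q) sqrt(Az))^(alpha-1) = 1], and the
    infinite products in [Gamma_q] and [J^(2)] cancel, being nonzero because
    [alpha] is not a non-positive integer. *)

From Pilot Require Import Defs.
From Stdlib Require Import Reals Lra Lia.
From Coquelicot Require Import Coquelicot.
Open Scope R_scope.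

Lemma Cmod_cexp (z : C) : Cmod (cexp z) = exp (Re z).
Proof.
  unfold cexp, Cmod; simpl.
  replace (exp (Re z) * cos (Im z) * (exp (Re z) * cos (Im z) * 1)
           + exp (Re z) * sin (Im z) * (exp (Re z) * sin (Im z) * 1))
    with (exp (Re z) ^ 2 * (sin (Im z) ^ 2 + cos (Im z) ^ 2)) by ring.
  rewrite <- !Rsqr_pow2, sin2_cos2, Rmult_1_r.
  apply sqrt_Rsqr, Rlt_le, exp_pos.
Qed.

Lemma cexp_add (u v : C) : cexp (u + v)%C = (cexp u * cexp v)%C.
Proof.
  destruct u as [u1 u2], v as [v1 v2]; unfold cexp, Cmult, Cplus; simpl.
  rewrite exp_plus, cos_plus, sin_plus.
  apply injective_projections; simpl; ring.
Qed.

Lemma cexp_0 : cexp 0%C = 1%C.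
Proof.
  unfold cexp; simpl; rewrite exp_0, cos_0, sin_0.
  apply injective_projections; simpl; ring.
Qed.

Lemma cexp_neq0 (z : C) : cexp z <> 0%C.
Proof.
  intros E; pose proof (exp_pos (Re z)).
  rewrite <- Cmod_cexp, E, Cmod_0 in H; lra.
Qed.

Lemma cexp_RtoC (x : R) : cexp (RtoC x) = RtoC (exp x).
Proof.
  unfold cexp; simpl; rewrite cos_0, sin_0.
  apply injective_projections; simpl; ring.
Qed.

Lemma qpow_RtoC (q x : R) : 0 < q -> qpow q (RtoC x) = RtoC (Rpower q x).
Proof.
  intros hq; unfold qpow, Rpower; rewrite <- cexp_RtoC; f_equal.
  apply injective_projections; simpl; ring.
Qed.

Lemma Cmod_qpow (q : R) (w : C) : Cmod (qpow q w) = Rpower q (Re w).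
Proof.
  unfold qpow, Rpower; rewrite Cmod_cexp; f_equal.
  destruct w; simpl; ring.
Qed.

Lemma Cmod_Re_neq0 (w : C) :
  Re w <> 0 -> Cmod w = Rabs (Re w) * sqrt (1 + (Im w / Re w)²).
Proof.
  intros hx; destruct w as [x y]; simpl in *; unfold Cmod; simpl.
  rewrite <- sqrt_Rsqr_abs, <- sqrt_mult.
  - f_equal; unfold Rsqr; field; auto.
  - apply Rle_0_sqr.
  - pose proof (Rle_0_sqr (y / x)); lra.
Qed.

Lemma polar_Carg (w : C) :
  w <> 0%C -> Cmod w * cos (Carg w) = Re w /\ Cmod w * sin (Carg w) = Im w.
Proof.
  intros hw; unfold Carg.
  assert (Hsq : Re w <> 0 -> 0 < sqrt (1 + (Im w / Re w)²)).
  { intros; apply sqrt_lt_R0; pose proof (Rle_0_sqr (Im w / Re w)); lra. }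
  destruct (Rlt_dec 0 (Re w)) as [Hpos | Hpos].
  - rewrite Cmod_Re_neq0, Rabs_pos_eq, cos_atan, sin_atan by lra.
    specialize (Hsq ltac:(lra)); split; field; lra.
  - destruct (Rlt_dec (Re w) 0) as [Hneg | Hneg].
    + rewrite Cmod_Re_neq0, Rabs_left by lra.
      specialize (Hsq ltac:(lra)).
      destruct (Rle_dec 0 (Im w)).
      * rewrite neg_cos, neg_sin, cos_atan, sin_atan; split; field; lra.
      * rewrite cos_minus, sin_minus, cos_PI, sin_PI, cos_atan, sin_atan.
        split; field; lra.
    + assert (Hmod : Cmod w = Rabs (Im w)).
      { destruct w as [x y]; simpl in *; unfold Cmod; simpl.
        replace x with 0 by lra; rewrite <- sqrt_Rsqr_abs; f_equal; unfold Rsqr; ring. }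
      destruct (Rlt_dec 0 (Im w)).
      * rewrite cos_PI2, sin_PI2, Hmod, Rabs_pos_eq by lra; split; lra.
      * destruct (Rlt_dec (Im w) 0).
        -- rewrite cos_neg, sin_neg, cos_PI2, sin_PI2, Hmod, Rabs_left by lra; split; lra.
        -- exfalso; apply hw; destruct w as [x y]; simpl in *.
           apply injective_projections; simpl; lra.
Qed.

Lemma cexp_Clog (w : C) : w <> 0%C -> cexp (Clog w) = w.
Proof.
  intros hw; destruct (polar_Carg w hw) as [Hc Hs]; unfold cexp, Clog; simpl.
  rewrite exp_ln by (apply Cmod_gt_0; auto).
  destruct w; simpl in *; rewrite Hc, Hs; auto.
Qed.

Lemma Carg_bound (w : C) : - PI < Carg w <= PI.
Proof.
  pose proof PI_RGT_0; pose proof (atan_bound (Im w / Re w)); unfold Carg.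
  destruct (Rlt_dec 0 (Re w)); [lra |].
  destruct (Rlt_dec (Re w) 0).
  - assert (/ Re w < 0) by (apply Rinv_lt_0_compat; lra).
    destruct (Rle_dec 0 (Im w)).
    + assert (atan (Im w / Re w) <= atan 0).
      { destruct (Req_dec (Im w) 0) as [-> | ]; [unfold Rdiv; rewrite Rmult_0_l; lra |].
        left; apply atan_increasing; unfold Rdiv; nra. }
      rewrite atan_0 in *; lra.
    + assert (atan 0 < atan (Im w / Re w)).
      { apply atan_increasing; unfold Rdiv; nra. }
      rewrite atan_0 in *; lra.
  - destruct (Rlt_dec 0 (Im w)); [lra |]; destruct (Rlt_dec (Im w) 0); lra.
Qed.

Lemma Carg_polar (r phi : R) :
  0 < r -> - (PI / 2) < phi <= PI / 2 -> Carg (r * cos phi, r * sin phi) = phi.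
Proof.
  intros hr hphi; unfold Carg; simpl.
  destruct (Req_dec phi (PI / 2)) as [-> | E].
  - rewrite cos_PI2, sin_PI2, Rmult_0_r, Rmult_1_r.
    destruct (Rlt_dec 0 0); [lra |]; destruct (Rlt_dec 0 0); [lra |].
    destruct (Rlt_dec 0 r); [auto | lra].
  - assert (0 < cos phi) by (apply cos_gt_0; lra).
    destruct (Rlt_dec 0 (r * cos phi)); [| exfalso; nra].
    replace (r * sin phi / (r * cos phi)) with (tan phi) by (unfold tan; field; lra).
    apply atan_tan; lra.
Qed.

Lemma Carg_scal (t : R) (w : C) : 0 < t -> Carg (RtoC t * w)%C = Carg w.
Proof.
  intros ht; destruct w as [x y]; unfold Carg, Cmult, RtoC; simpl.
  replace (t * x - 0 * y) with (t * x) by ring.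
  replace (t * y + 0 * x) with (t * y) by ring.
  replace (t * y / (t * x)) with (y / x).
  2:{ destruct (Req_dec x 0) as [-> | ]; [unfold Rdiv; rewrite Rmult_0_r, !Rinv_0; ring |].
      field; lra. }
  destruct (Rlt_dec 0 (t * x)), (Rlt_dec 0 x); try (exfalso; nra); auto.
  destruct (Rlt_dec (t * x) 0), (Rlt_dec x 0); try (exfalso; nra).
  - destruct (Rle_dec 0 (t * y)), (Rle_dec 0 y); auto; exfalso; nra.
  - destruct (Rlt_dec 0 (t * y)), (Rlt_dec 0 y); try (exfalso; nra); auto.
    destruct (Rlt_dec (t * y) 0), (Rlt_dec y 0); auto; exfalso; nra.
Qed.

Lemma Clog_scal (t : R) (w : C) :
  0 < t -> w <> 0%C -> Clog (RtoC t * w)%C = (RtoC (ln t) + Clog w)%C.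
Proof.
  intros ht hw; unfold Clog.
  rewrite Carg_scal, Cmod_mult, Cmod_R, Rabs_pos_eq, ln_mult
    by (first [lra | apply Cmod_gt_0; auto]).
  apply injective_projections; simpl; ring.
Qed.

Lemma Cppow_neq0 (w c : C) : w <> 0%C -> Cppow w c = cexp (c * Clog w).
Proof. intros hw; unfold Cppow; destruct (Ceq_dec w 0); [contradiction | auto]. Qed.

Lemma Csqrt_neq0 (w : C) : w <> 0%C -> Csqrt w <> 0%C.
Proof. intros hw; unfold Csqrt; rewrite Cppow_neq0 by auto; apply cexp_neq0. Qed.

Lemma Csqrt_sqr (w : C) : w <> 0%C -> (Csqrt w * Csqrt w)%C = w.
Proof.
  intros hw; unfold Csqrt; rewrite Cppow_neq0, <- cexp_add by auto.
  rewrite <- Cmult_plus_distr_r, <- RtoC_plus.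
  replace (1 / 2 + 1 / 2) with 1 by field; rewrite Cmult_1_l.
  apply cexp_Clog; auto.
Qed.

Lemma Clog_Csqrt (w : C) : w <> 0%C -> Clog (Csqrt w) = (RtoC (1 / 2) * Clog w)%C.
Proof.
  intros hw; unfold Csqrt; rewrite Cppow_neq0 by auto.
  unfold Clog at 1; rewrite Cmod_cexp, ln_exp.
  unfold cexp, Clog; simpl.
  replace (1 / 2 * Carg w + 0 * ln (Cmod w)) with (1 / 2 * Carg w) by ring.
  rewrite Carg_polar.
  - apply injective_projections; simpl; ring.
  - apply exp_pos.
  - pose proof (Carg_bound w); lra.
Qed.

Lemma pow_le1 (x : R) (n : nat) : 0 <= x <= 1 -> x ^ n <= 1.
Proof. intros H; induction n; simpl; nra. Qed.

Lemma pow_le_pow_le1 (x : R) (m n : nat) : 0 <= x <= 1 -> (m <= n)%nat -> x ^ n <= x ^ m.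
Proof.
  intros H Hmn; replace n with (m + (n - m))%nat by lia; rewrite pow_add.
  pose proof (pow_le1 x (n - m) H); pose proof (pow_le x m ltac:(lra)); nra.
Qed.

Lemma is_lim_seq_pow0 (q : R) : 0 <= q < 1 -> is_lim_seq (fun n => q ^ n) 0.
Proof. intros hq; apply is_lim_seq_geom; rewrite Rabs_pos_eq; lra. Qed.

Lemma Rpower_pos (x y : R) : 0 < Rpower x y.
Proof. apply exp_pos. Qed.

Lemma ln_neg (q : R) : 0 < q < 1 -> ln q < 0.
Proof. intros hq; rewrite <- ln_1; apply ln_increasing; lra. Qed.

Lemma Rpower_le_contravar (q x y : R) : 0 < q < 1 -> x <= y -> Rpower q y <= Rpower q x.
Proof.
  intros hq hxy; unfold Rpower; pose proof (ln_neg q hq).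
  destruct (Req_dec x y) as [-> | ]; [lra |].
  left; apply exp_increasing; nra.
Qed.

Lemma Rpower_lt1 (q x : R) : 0 < q < 1 -> 0 < x -> Rpower q x < 1.
Proof.
  intros hq hx; unfold Rpower; rewrite <- exp_0; apply exp_increasing.
  pose proof (ln_neg q hq); nra.
Qed.

Lemma qnum_pos (q x : R) : 0 < q < 1 -> 0 < x -> 0 < qnum q x.
Proof.
  intros hq hx; pose proof (Rpower_lt1 q x hq hx); unfold qnum.
  apply Rdiv_lt_0_compat; lra.
Qed.

Lemma Rpower_lin (q a b : R) (n : nat) :
  0 < q -> Rpower q (a * INR n + b) = Rpower q a ^ n * Rpower q b.
Proof.
  intros hq; rewrite Rpower_plus, <- Rpower_mult, Rpower_pow by apply Rpower_pos.
  reflexivity.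
Qed.

Lemma Rmult_div_le_compat (x x' y y' z z' : R) :
  0 <= x <= x' -> 0 <= y <= y' -> 0 < z' <= z -> x * y / z <= x' * y' / z'.
Proof.
  intros Hx Hy Hz; unfold Rdiv.
  apply Rmult_le_compat; [nra | apply Rlt_le, Rinv_0_lt_compat; lra | nra |].
  apply Rinv_le_contravar; lra.
Qed.

Fixpoint csum (f : nat -> C) (m : nat) : C :=
  match m with O => 0%C | S k => (csum f k + f k)%C end.
Fixpoint rsum (f : nat -> R) (m : nat) : R :=
  match m with O => 0 | S k => rsum f k + f k end.

Lemma sum_n_csum (f : nat -> C) (m : nat) : sum_n f m = csum f (S m).
Proof.
  induction m.
  - rewrite sum_O; simpl; apply injective_projections; simpl; ring.
  - rewrite sum_Sn, IHm; reflexivity.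
Qed.

Lemma csum_sub (f g : nat -> C) (m : nat) :
  csum (fun k => f k - g k)%C m = (csum f m - csum g m)%C.
Proof.
  induction m; simpl; [apply injective_projections; simpl; ring |].
  rewrite IHm; ring.
Qed.

Lemma Cmod_csum (f : nat -> C) (m : nat) : Cmod (csum f m) <= rsum (fun k => Cmod (f k)) m.
Proof.
  induction m; simpl; [rewrite Cmod_0; lra |].
  eapply Rle_trans; [apply Cmod_triangle | lra].
Qed.

Lemma csum_add_range (f : nat -> C) (a b : nat) :
  csum f (a + b) = (csum f a + csum (fun k => f (a + k)%nat) b)%C.
Proof.
  induction b; simpl.
  - rewrite Nat.add_0_r; apply injective_projections; simpl; ring.
  - rewrite Nat.add_succ_r; simpl; rewrite IHb; ring.
Qed.

Lemma csum_eventually_zero (f : nat -> C) (n j : nat) :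
  (forall k, (n < k)%nat -> f k = 0%C) -> csum f (S n + j) = csum f (S n).
Proof.
  intros H; induction j; [rewrite Nat.add_0_r; auto |].
  rewrite Nat.add_succ_r; simpl in *; rewrite IHj, (H (S (n + j))) by lia.
  apply injective_projections; simpl; ring.
Qed.

Lemma rsum_le (f g : nat -> R) (m : nat) :
  (forall k, (k < m)%nat -> f k <= g k) -> rsum f m <= rsum g m.
Proof.
  induction m; simpl; intros H; [lra |].
  assert (f m <= g m) by (apply H; lia).
  assert (rsum f m <= rsum g m) by (apply IHm; intros; apply H; lia); lra.
Qed.

Lemma rsum_scal (c : R) (f : nat -> R) (m : nat) :
  rsum (fun k => c * f k) m = c * rsum f m.
Proof. induction m; simpl; [ring | rewrite IHm; ring]. Qed.

Lemma rsum_geom (r : R) (m : nat) : rsum (fun k => r ^ k) m * (1 - r) = 1 - r ^ m.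
Proof. induction m; simpl; [ring | rewrite Rmult_plus_distr_r, IHm; ring]. Qed.

Lemma rsum_geom_le (r : R) (a m : nat) :
  0 <= r < 1 -> rsum (fun k => r ^ (a + k)) m <= r ^ a / (1 - r).
Proof.
  intros hr.
  assert (E : rsum (fun k => r ^ (a + k)) m = r ^ a * rsum (fun k => r ^ k) m)
    by (induction m; simpl; [ring | rewrite IHm, pow_add; ring]).
  rewrite E; pose proof (rsum_geom r m).
  pose proof (pow_le r m ltac:(lra)); pose proof (pow_le r a ltac:(lra)).
  assert (rsum (fun k => r ^ k) m <= 1 / (1 - r)).
  { apply Rmult_le_reg_r with (1 - r); [lra |].
    replace (1 / (1 - r) * (1 - r)) with 1 by (field; lra); lra. }
  unfold Rdiv; rewrite <- (Rmult_1_l (/ (1 - r))); apply Rmult_le_compat_l; auto.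
Qed.

Lemma prodR_nonneg (f : nat -> R) (m : nat) :
  (forall i, (i < m)%nat -> 0 <= f i) -> 0 <= prodR f m.
Proof.
  induction m; simpl; intros H; [lra |].
  apply Rmult_le_pos; [apply IHm; intros |]; apply H; lia.
Qed.

Lemma prodR_pos (f : nat -> R) (m : nat) :
  (forall i, (i < m)%nat -> 0 < f i) -> 0 < prodR f m.
Proof.
  induction m; simpl; intros H; [lra |].
  apply Rmult_lt_0_compat; [apply IHm; intros |]; apply H; lia.
Qed.

Lemma prodR_le (f g : nat -> R) (m : nat) :
  (forall i, (i < m)%nat -> 0 <= f i <= g i) -> prodR f m <= prodR g m.
Proof.
  induction m; simpl; intros H; [lra |].
  apply Rmult_le_compat;
    [apply prodR_nonneg; intros | | apply IHm; intros |]; apply H; lia.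
Qed.

Lemma prodR_const (c : R) (m : nat) : prodR (fun _ => c) m = c ^ m.
Proof. induction m; simpl; [auto | rewrite IHm; ring]. Qed.

Lemma prodR_const_le (f : nat -> R) (c : R) (m : nat) :
  0 <= c -> (forall i, (i < m)%nat -> c <= f i) -> c ^ m <= prodR f m.
Proof. intros; rewrite <- prodR_const; apply prodR_le; intros; split; auto. Qed.

Lemma prodR_mult (f g : nat -> R) (m : nat) :
  prodR (fun i => f i * g i) m = prodR f m * prodR g m.
Proof. induction m; simpl; [ring | rewrite IHm; ring]. Qed.

Lemma prodR_inv (f : nat -> R) (m : nat) : prodR (fun i => / f i) m = / prodR f m.
Proof. induction m; simpl; [field | rewrite IHm, Rinv_mult; auto]. Qed.

Lemma prodR_div (f : nat -> R) (d : R) (m : nat) :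
  prodR (fun i => f i / d) m = prodR f m / d ^ m.
Proof. unfold Rdiv; rewrite prodR_mult, prodR_const, pow_inv; auto. Qed.

Lemma prodR_ext (f g : nat -> R) (m : nat) :
  (forall i, (i < m)%nat -> f i = g i) -> prodR f m = prodR g m.
Proof.
  induction m; simpl; intros H; [auto |].
  rewrite IHm, H; auto; intros; apply H; lia.
Qed.

Lemma prodR_eq0 (f : nat -> R) (m i : nat) : (i < m)%nat -> f i = 0 -> prodR f m = 0.
Proof.
  induction m; simpl; intros Hi H; [lia |].
  destruct (Nat.eq_dec i m) as [-> | ]; [rewrite H; ring |].
  rewrite IHm by (auto; lia); ring.
Qed.

Lemma prodR_neq0 (f : nat -> R) (m : nat) : (forall i, f i <> 0) -> prodR f m <> 0.
Proof. intros H; induction m; simpl; [lra | apply Rmult_integral_contrapositive; auto]. Qed.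

Lemma prodR_add_range (f : nat -> R) (a b : nat) :
  prodR f (a + b) = prodR f a * prodR (fun j => f (a + j)%nat) b.
Proof.
  induction b; simpl; [rewrite Nat.add_0_r; ring |].
  rewrite Nat.add_succ_r; simpl; rewrite IHb; ring.
Qed.

Lemma Rabs_prodR (f : nat -> R) (m : nat) :
  Rabs (prodR f m) = prodR (fun i => Rabs (f i)) m.
Proof. induction m; simpl; [apply Rabs_R1 | rewrite Rabs_mult, IHm; auto]. Qed.

Lemma prodR_pow_id (q : R) (k : nat) :
  prodR (fun j => q ^ j) k = q ^ (Nat.div (k * (k - 1)) 2).
Proof.
  induction k; [reflexivity |].
  simpl prodR; rewrite IHk, <- pow_add; f_equal.
  destruct k; [reflexivity |].
  replace (S (S k) * (S (S k) - 1))%nat with (S k * (S k - 1) + S k * 2)%nat by (simpl; nia).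
  rewrite Nat.div_add by lia; reflexivity.
Qed.

Lemma is_lim_seq_prodR (f : nat -> nat -> R) (l : nat -> R) (m : nat) :
  (forall i, (i < m)%nat -> is_lim_seq (fun n => f n i) (l i)) ->
  is_lim_seq (fun n => prodR (f n) m) (prodR l m).
Proof.
  induction m; simpl; intros H; [apply is_lim_seq_const |].
  apply is_lim_seq_mult'; [apply IHm; intros |]; apply H; lia.
Qed.

Lemma prodC_ext (f g : nat -> C) (m : nat) :
  (forall i, (i < m)%nat -> f i = g i) -> prodC f m = prodC g m.
Proof.
  induction m; simpl; intros H; [auto |].
  rewrite IHm, H; auto; intros; apply H; lia.
Qed.

Lemma prodC_pred_l (f : nat -> C) (m : nat) :
  (1 <= m)%nat -> prodC f m = (f O * prodC (fun i => f (S i)) (m - 1))%C.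
Proof.
  intros Hm; replace m with (S (m - 1)) at 1 by lia; generalize (m - 1)%nat; clear Hm.
  induction n; [simpl; ring |].
  change (prodC f (S (S n))) with (prodC f (S n) * f (S n))%C.
  rewrite IHn; simpl; ring.
Qed.

Lemma Cmod_prodC (f : nat -> C) (m : nat) : Cmod (prodC f m) = prodR (fun i => Cmod (f i)) m.
Proof. induction m; simpl; [apply Cmod_1 | rewrite Cmod_mult, IHm; auto]. Qed.

Lemma prodC_RtoC (f : nat -> R) (m : nat) :
  prodC (fun i => RtoC (f i)) m = RtoC (prodR f m).
Proof. induction m; simpl; [auto | rewrite IHm, RtoC_mult; auto]. Qed.

Lemma prodC_1 (m : nat) : prodC (fun _ => 1%C) m = 1%C.
Proof. induction m; simpl; [auto | rewrite IHm; ring]. Qed.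

Definition Ccv (x : nat -> C) (l : C) :=
  forall eps, 0 < eps -> exists N, forall n, (N <= n)%nat -> Cmod (x n - l) < eps.

Lemma C_lim_Ccv (u : nat -> C) (l : C) : Ccv u l -> Defs.C_lim u = l.
Proof.
  intros H; unfold Defs.C_lim; set (F := filtermap u eventually).
  assert (HF : ProperFilter F) by (apply filtermap_proper_filter, eventually_filter).
  assert (Hl : is_filter_lim F l).
  { intros P [eps Heps]; unfold F, filtermap.
    destruct (H eps (cond_pos eps)) as [N HN]; exists N; intros n Hn.
    apply Heps, (norm_compat1 (V := C_NormedModule)); apply HN; lia. }
  assert (Hc : cauchy F) by (intros eps; exists l; apply Hl; exists eps; auto).
  pose proof (@complete_cauchy (CompleteNormedModule.CompleteSpace _ C_CompleteNormedModule)
                F HF Hc) as Hlim.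
  apply (is_filter_lim_unique (F := F)); auto.
  - apply Proper_StrongProper in HF; auto.
  - intros P [eps Heps]; eapply filter_imp; [| apply (Hlim eps)]; auto.
Qed.

Lemma Ccv_const (c : C) : Ccv (fun _ => c) c.
Proof.
  intros e He; exists O; intros; cbv beta.
  replace (c - c)%C with (RtoC 0) by ring; rewrite Cmod_0; auto.
Qed.

Lemma Ccv_ext (x y : nat -> C) (l : C) :
  (forall n, x n = y n) -> Ccv x l -> Ccv y l.
Proof.
  intros E H e He; destruct (H e He) as [N HN].
  exists N; intros n Hn; rewrite <- E; auto.
Qed.

Lemma Ccv_plus (x y : nat -> C) (a b : C) :
  Ccv x a -> Ccv y b -> Ccv (fun n => x n + y n)%C (a + b)%C.
Proof.
  intros Hx Hy e He.
  destruct (Hx (e / 2)) as [N1 H1]; [lra |]; destruct (Hy (e / 2)) as [N2 H2]; [lra |].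
  exists (max N1 N2); intros n Hn.
  replace (x n + y n - (a + b))%C with ((x n - a) + (y n - b))%C by ring.
  eapply Rle_lt_trans; [apply Cmod_triangle |].
  specialize (H1 n ltac:(lia)); specialize (H2 n ltac:(lia)); lra.
Qed.

Lemma Ccv_bounded (x : nat -> C) (a : C) :
  Ccv x a -> exists N, forall n, (N <= n)%nat -> Cmod (x n) <= Cmod a + 1.
Proof.
  intros H; destruct (H 1) as [N HN]; [lra |]; exists N; intros n Hn.
  replace (x n) with ((x n - a) + a)%C by ring.
  eapply Rle_trans; [apply Cmod_triangle |]; specialize (HN n Hn); lra.
Qed.

Lemma Ccv_mult (x y : nat -> C) (a b : C) :
  Ccv x a -> Ccv y b -> Ccv (fun n => x n * y n)%C (a * b)%C.
Proof.
  intros Hx Hy e He; destruct (Ccv_bounded y b Hy) as [N0 H0].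
  set (M := Cmod b + 1); set (Ka := Cmod a + 1).
  assert (HM : 0 < M) by (unfold M; pose proof (Cmod_ge_0 b); lra).
  assert (HKa : 0 < Ka) by (unfold Ka; pose proof (Cmod_ge_0 a); lra).
  destruct (Hx (e / (2 * M))) as [N1 H1]; [apply Rdiv_lt_0_compat; lra |].
  destruct (Hy (e / (2 * Ka))) as [N2 H2]; [apply Rdiv_lt_0_compat; lra |].
  exists (max N0 (max N1 N2)); intros n Hn.
  replace (x n * y n - a * b)%C with ((x n - a) * y n + a * (y n - b))%C by ring.
  eapply Rle_lt_trans; [apply Cmod_triangle |]; rewrite !Cmod_mult.
  specialize (H0 n ltac:(lia)); specialize (H1 n ltac:(lia)); specialize (H2 n ltac:(lia)).
  assert (Cmod (x n - a) * Cmod (y n) <= e / (2 * M) * M)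
    by (apply Rmult_le_compat; try apply Cmod_ge_0; unfold M in *; lra).
  assert (Cmod a * Cmod (y n - b) < Ka * (e / (2 * Ka))).
  { apply Rle_lt_trans with (Ka * Cmod (y n - b)).
    - apply Rmult_le_compat_r; [apply Cmod_ge_0 | unfold Ka; lra].
    - apply Rmult_lt_compat_l; auto. }
  replace (e / (2 * M) * M) with (e / 2) in * by (field; lra).
  replace (Ka * (e / (2 * Ka))) with (e / 2) in * by (field; lra); lra.
Qed.

Lemma Ccv_inv (y : nat -> C) (b : C) : b <> 0%C -> Ccv y b -> Ccv (fun n => / y n)%C (/ b)%C.
Proof.
  intros Hb Hy e He; assert (Hmb : 0 < Cmod b) by (apply Cmod_gt_0; exact Hb).
  destruct (Hy (Cmod b / 2)) as [N0 H0]; [lra |].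
  destruct (Hy (e * (Cmod b * Cmod b) / 2)) as [N1 H1].
  { apply Rdiv_lt_0_compat; [apply Rmult_lt_0_compat; nra | lra]. }
  exists (max N0 N1); intros n Hn; specialize (H0 n ltac:(lia)); specialize (H1 n ltac:(lia)).
  assert (Hy1 : Cmod b / 2 <= Cmod (y n)).
  { pose proof (Cmod_triangle (- (y n - b)) (y n)) as T.
    replace (- (y n - b) + y n)%C with b in T by ring; rewrite Cmod_opp in T; lra. }
  assert (Hyn : y n <> 0%C) by (intros E; rewrite E, Cmod_0 in Hy1; lra).
  replace (/ y n - / b)%C with (- (y n - b) / (y n * b))%C by (field; auto).
  rewrite Cmod_div, Cmod_mult, Cmod_opp by (apply Cmult_neq_0; auto).
  apply Rmult_lt_reg_r with (Cmod (y n) * Cmod b); [nra |].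
  unfold Rdiv; rewrite Rmult_assoc, Rinv_l, Rmult_1_r by nra.
  assert (e * Cmod b * (Cmod b / 2) <= e * Cmod b * Cmod (y n))
    by (apply Rmult_le_compat_l; nra).
  lra.
Qed.

Lemma Ccv_div (x y : nat -> C) (a b : C) :
  b <> 0%C -> Ccv x a -> Ccv y b -> Ccv (fun n => x n / y n)%C (a / b)%C.
Proof. intros; apply Ccv_mult; [| apply Ccv_inv]; auto. Qed.

Lemma Ccv_RtoC (x : nat -> R) (l : R) :
  is_lim_seq x l -> Ccv (fun n => RtoC (x n)) (RtoC l).
Proof.
  intros H e He; apply is_lim_seq_spec in H; destruct (H (mkposreal e He)) as [N HN].
  exists N; intros n Hn; rewrite <- RtoC_minus, Cmod_R; apply HN; lia.
Qed.

Lemma Ccv_prodC (f : nat -> nat -> C) (l : nat -> C) (m : nat) :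
  (forall i, (i < m)%nat -> Ccv (fun n => f n i) (l i)) ->
  Ccv (fun n => prodC (f n) m) (prodC l m).
Proof.
  induction m; simpl; intros H; [apply Ccv_const |].
  apply Ccv_mult; [apply IHm; intros |]; apply H; lia.
Qed.

Lemma Cmod_le_of_Ccv (x : nat -> C) (a : C) (B : R) :
  Ccv x a -> (exists N, forall n, (N <= n)%nat -> Cmod (x n) <= B) -> Cmod a <= B.
Proof.
  intros H [N HN]; apply Rnot_lt_le; intros Hlt.
  destruct (H (Cmod a - B)) as [N1 H1]; [lra |].
  set (n := max N N1); specialize (H1 n ltac:(lia)); specialize (HN n ltac:(lia)).
  pose proof (Cmod_triangle (x n) (- (x n - a))) as T.
  replace (x n + - (x n - a))%C with a in T by ring; rewrite Cmod_opp in T; lra.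
Qed.

Lemma Ccv_C_series (u : nat -> C) (C0 : R) :
  (forall k, Cmod (u k) <= C0 * (1 / 2) ^ k) -> Ccv (csum u) (C_series u).
Proof.
  intros Hb.
  assert (Hex : ex_series (K := C_AbsRing) (V := C_CompleteNormedModule) u).
  { apply (ex_series_le (K := C_AbsRing) (V := C_CompleteNormedModule) u
             (fun k => C0 * (1 / 2) ^ k)); [intros k; apply Hb |].
    apply (ex_series_scal_l (K := R_AbsRing) (V := R_NormedModule) C0).
    apply ex_series_geom; rewrite Rabs_pos_eq; lra. }
  destruct Hex as [L HL].
  assert (HE : Ccv (sum_n u) L).
  { intros e He.
    assert (Hf : 0 < e / @norm_factor C_AbsRing C_NormedModule)
      by (apply Rdiv_lt_0_compat; [auto | apply norm_factor_gt_0]).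
    destruct (HL (ball L (mkposreal _ Hf))) as [M HM]; [exists (mkposreal _ Hf); auto |].
    exists M; intros m Hm; specialize (HM m Hm).
    apply (norm_compat2 (V := C_NormedModule)) in HM; simpl in HM.
    replace (norm_factor * (e / norm_factor)) with e in HM
      by (field; apply Rgt_not_eq, norm_factor_gt_0).
    exact HM. }
  unfold C_series; rewrite (C_lim_Ccv _ L HE).
  intros e He; destruct (HE e He) as [M HM]; exists (S M); intros m Hm.
  destruct m; [lia |]; rewrite <- sum_n_csum; apply HM; lia.
Qed.

(** * Tannery's theorem, uniformly on a disk *)

Definition unif_cv_disk (Rad : R) (f : nat -> C -> C) (g : C -> C) :=
  forall e, 0 < e -> exists N, forall n z, (N <= n)%nat -> Cmod z <= Rad ->
    Cmod (f n z - g z) <= e.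

Lemma unif_cv_disk_csum (Rad : R) (t : nat -> nat -> C -> C) (u : nat -> C -> C) (m : nat) :
  (forall k, unif_cv_disk Rad (fun n => t n k) (u k)) ->
  unif_cv_disk Rad (fun n z => csum (fun k => t n k z) m) (fun z => csum (fun k => u k z) m).
Proof.
  intros H; induction m; intros e He; simpl.
  - exists O; intros; replace (RtoC 0 - RtoC 0)%C with (RtoC 0) by ring.
    rewrite Cmod_0; lra.
  - destruct (IHm (e / 2)) as [N1 H1]; [lra |]; destruct (H m (e / 2)) as [N2 H2]; [lra |].
    exists (max N1 N2); intros n z Hn Hz.
    specialize (H1 n z ltac:(lia) Hz); specialize (H2 n z ltac:(lia) Hz).
    replace (csum (fun k => t n k z) m + t n m z - (csum (fun k => u k z) m + u m z))%C
      with ((csum (fun k => t n k z) m - csum (fun k => u k z) m) + (t n m z - u m z))%C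
      by ring.
    eapply Rle_trans; [apply Cmod_triangle | lra].
Qed.

Lemma Cmod_csum_tail_le (f : nat -> C) (B : R) (a m : nat) :
  (forall k, Cmod (f k) <= B * (1 / 2) ^ k) ->
  Cmod (csum (fun k => f (a + k)%nat) m) <= 2 * B * (1 / 2) ^ a.
Proof.
  intros Hf; eapply Rle_trans; [apply Cmod_csum |].
  eapply Rle_trans; [apply rsum_le with (g := fun k => B * (1 / 2) ^ (a + k)); auto |].
  rewrite rsum_scal.
  assert (0 <= B) by (pose proof (Cmod_ge_0 (f O)); specialize (Hf O); simpl in Hf; lra).
  pose proof (rsum_geom_le (1 / 2) a m ltac:(lra)).
  replace (2 * B * (1 / 2) ^ a) with (B * ((1 / 2) ^ a / (1 - 1 / 2))) by field.
  apply Rmult_le_compat_l; auto.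
Qed.

Lemma C_series_eventually_zero (f : nat -> C) (n : nat) :
  (forall k, (n < k)%nat -> f k = 0%C) -> C_series f = csum f (S n).
Proof.
  intros H; apply C_lim_Ccv; intros e He; exists n; intros m Hm.
  rewrite sum_n_csum; replace (S m) with (S n + (m - n))%nat by lia.
  rewrite csum_eventually_zero by auto.
  replace (csum f (S n) - csum f (S n))%C with (RtoC 0) by ring; rewrite Cmod_0; auto.
Qed.

Section Tannery.

Variables (Rad C0 : R) (N0 : nat) (t : nat -> nat -> C -> C) (u : nat -> C -> C).
Hypothesis C0_nonneg : 0 <= C0.
Hypothesis t_bound :
  forall n k z, (N0 <= n)%nat -> Cmod z <= Rad -> Cmod (t n k z) <= C0 * (1 / 2) ^ k.
Hypothesis t_vanish : forall n k z, (n < k)%nat -> t n k z = 0%C.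
Hypothesis t_cv : forall k, unif_cv_disk Rad (fun n => t n k) (u k).

Lemma tannery_limit_bound (k : nat) (z : C) :
  Cmod z <= Rad -> Cmod (u k z) <= C0 * (1 / 2) ^ k.
Proof.
  intros Hz; apply (Cmod_le_of_Ccv (fun n => t n k z)).
  - intros e He; destruct (t_cv k (e / 2)) as [N HN]; [lra |].
    exists N; intros n Hn; specialize (HN n z Hn Hz); lra.
  - exists N0; intros; apply t_bound; auto.
Qed.

Theorem tannery_unif_cv_disk :
  unif_cv_disk Rad (fun n z => C_series (fun k => t n k z)) (fun z => C_series (fun k => u k z)).
Proof.
  intros eps Heps.
  destruct (pow_lt_1_zero (1 / 2)) with (y := eps / (8 * (C0 + 1))) as [k2 Hk2].
  { rewrite Rabs_pos_eq; lra. } { apply Rdiv_lt_0_compat; lra. }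
  specialize (Hk2 k2 (le_n _)); rewrite Rabs_pos_eq in Hk2 by (apply pow_le; lra).
  assert (Htail : 4 * C0 * (1 / 2) ^ k2 <= eps / 2).
  { apply Rle_trans with (4 * (C0 + 1) * (eps / (8 * (C0 + 1)))); [| right; field; lra].
    apply Rmult_le_compat; try lra; apply pow_le; lra. }
  destruct (unif_cv_disk_csum Rad t u k2 t_cv (eps / 4)) as [N1 HN1]; [lra |].
  exists (max N0 (max N1 k2)); intros n z Hn Hz.
  rewrite (C_series_eventually_zero _ n) by (intros; apply t_vanish; auto).
  destruct (Ccv_C_series (fun k => u k z) C0 (fun k => tannery_limit_bound k z Hz) (eps / 4))
    as [M HM]; [lra |].
  set (m := max M (S n)); set (L := C_series (fun k => u k z)) in *.
  set (d k := (t n k z - u k z)%C).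
  assert (Et : csum (fun k => t n k z) (S n) = (csum d m + csum (fun k => u k z) m)%C).
  { rewrite <- (csum_eventually_zero (fun k => t n k z) n (m - S n))
      by (intros; apply t_vanish; auto).
    replace (S n + (m - S n))%nat with m by lia.
    unfold d; rewrite csum_sub; ring. }
  assert (Ed : csum d m = (csum d k2 + csum (fun k => d (k2 + k)%nat) (m - k2))%C).
  { rewrite <- csum_add_range; f_equal; lia. }
  assert (H1 : Cmod (csum d k2) <= eps / 4).
  { unfold d; rewrite csum_sub; apply HN1; auto; lia. }
  assert (H2 : Cmod (csum (fun k => d (k2 + k)%nat) (m - k2)) <= 2 * (2 * C0) * (1 / 2) ^ k2).
  { apply Cmod_csum_tail_le; intros k; unfold d.
    eapply Rle_trans; [apply Cmod_triangle |]; rewrite Cmod_opp.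
    pose proof (t_bound n k z ltac:(lia) Hz); pose proof (tannery_limit_bound k z Hz); lra. }
  assert (H3 : Cmod (csum (fun k => u k z) m - L) < eps / 4) by (apply HM; unfold m; lia).
  rewrite Et, Ed.
  replace (csum d k2 + csum (fun k => d (k2 + k)%nat) (m - k2) + csum (fun k => u k z) m - L)%C
    with (csum d k2 + csum (fun k => d (k2 + k)%nat) (m - k2)
          + (csum (fun k => u k z) m - L))%C by ring.
  eapply Rle_trans; [apply Cmod_triangle |].
  pose proof (Cmod_triangle (csum d k2) (csum (fun k => d (k2 + k)%nat) (m - k2))); lra.
Qed.

End Tannery.

(** * q-Pochhammer symbols *)

Lemma qpoch_RtoC (x q : R) (k : nat) :
  qpoch (RtoC x) q k = RtoC (prodR (fun j => 1 - x * q ^ j) k).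
Proof.
  unfold qpoch; rewrite <- prodC_RtoC; apply prodC_ext; intros.
  rewrite RtoC_minus, RtoC_mult; auto.
Qed.

Lemma qpoch_0 (q : R) (k : nat) : qpoch 0 q k = 1%C.
Proof.
  rewrite qpoch_RtoC, (prodR_ext _ (fun _ => 1)) by (intros; ring).
  rewrite prodR_const, pow1; auto.
Qed.

Lemma Ccv_qpoch (a : nat -> C) (l : C) (q : R) (k : nat) :
  Ccv a l -> Ccv (fun n => qpoch (a n) q k) (qpoch l q k).
Proof.
  intros H; apply Ccv_prodC; intros i _.
  apply Ccv_plus; [apply Ccv_const |].
  apply (Ccv_ext (fun n => a n * (- RtoC (q ^ i)))%C); [intros; ring |].
  replace (- (l * RtoC (q ^ i)))%C with (l * (- RtoC (q ^ i)))%C by ring.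
  apply Ccv_mult; [auto | apply Ccv_const].
Qed.

Lemma Cmod_qpoch_le (a : C) (q : R) (k : nat) :
  0 < q < 1 -> Cmod (qpoch a q k) <= (1 + Cmod a) ^ k.
Proof.
  intros hq; unfold qpoch; rewrite Cmod_prodC, <- prodR_const.
  apply prodR_le; intros i _; split; [apply Cmod_ge_0 |].
  eapply Rle_trans; [apply Cmod_triangle |].
  rewrite Cmod_opp, Cmod_1, Cmod_mult, Cmod_R, Rabs_pos_eq by (apply pow_le; lra).
  pose proof (pow_le q i ltac:(lra)); pose proof (pow_le1 q i ltac:(lra)).
  pose proof (Cmod_ge_0 a); nra.
Qed.

Lemma Cmod_qpoch_ge_pow (a : C) (q m : R) (k : nat) :
  0 <= m -> (forall j, m <= Cmod (1 - a * RtoC (q ^ j))) -> m ^ k <= Cmod (qpoch a q k).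
Proof. intros hm H; unfold qpoch; rewrite Cmod_prodC; apply prodR_const_le; auto. Qed.

Lemma Cmod_qpoch_ge (a : C) (q : R) (k : nat) :
  0 < q < 1 -> Cmod a <= q -> (1 - q) ^ k <= Cmod (qpoch a q k).
Proof.
  intros hq ha; apply Cmod_qpoch_ge_pow; [lra |]; intros j.
  pose proof (Cmod_triangle (1 - a * RtoC (q ^ j)) (a * RtoC (q ^ j))) as T.
  replace (1 - a * RtoC (q ^ j) + a * RtoC (q ^ j))%C with (RtoC 1) in T by ring.
  rewrite Cmod_1, Cmod_mult, Cmod_R, Rabs_pos_eq in T by (apply pow_le; lra).
  pose proof (pow_le1 q j ltac:(lra)); pose proof (Cmod_ge_0 a).
  pose proof (pow_le q j ltac:(lra)); nra.
Qed.

Lemma min_pos_finite (f : nat -> R) (J : nat) :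
  (forall j, (j < J)%nat -> 0 < f j) -> exists m, 0 < m /\ forall j, (j < J)%nat -> m <= f j.
Proof.
  induction J; intros H; [exists 1; split; [lra | intros; lia] |].
  destruct IHJ as [m1 [Hm1 H1]]; [intros; apply H; lia |].
  exists (Rmin m1 (f J)); split; [apply Rmin_pos; [auto | apply H; lia] |].
  intros j Hj; destruct (Nat.eq_dec j J) as [-> | ]; [apply Rmin_r |].
  eapply Rle_trans; [apply Rmin_l | apply H1; lia].
Qed.

Lemma qpoch_qpow_factor_ge (q alpha : R) :
  0 < q < 1 -> (forall k : nat, alpha <> - INR k) ->
  exists m, 0 < m /\ forall j, m <= Cmod (1 - qpow q (RtoC alpha) * RtoC (q ^ j)).
Proof.
  intros hq halpha.
  assert (E : forall j, Cmod (1 - qpow q (RtoC alpha) * RtoC (q ^ j))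
                        = Rabs (1 - Rpower q (alpha + INR j))).
  { intros j; rewrite qpow_RtoC, <- RtoC_mult, <- RtoC_minus, Cmod_R by lra.
    rewrite Rpower_plus, Rpower_pow by lra; auto. }
  destruct (INR_archimed 1 (1 - alpha)) as [J HJ]; [lra |].
  destruct (min_pos_finite (fun j => Rabs (1 - Rpower q (alpha + INR j))) J) as [m1 [Hm1 H1]].
  { intros j Hj; apply Rabs_pos_lt; intros Hc.
    assert (Rpower q (alpha + INR j) = exp 0) by (rewrite exp_0; lra).
    unfold Rpower in H; apply exp_inv in H; pose proof (ln_neg q hq).
    apply (halpha j); nra. }
  exists (Rmin m1 (1 - q)); split; [apply Rmin_pos; lra |].
  intros j; rewrite E; destruct (Nat.lt_ge_cases j J).
  - eapply Rle_trans; [apply Rmin_l | apply H1; auto].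
  - eapply Rle_trans; [apply Rmin_r |].
    apply le_INR in H; pose proof (Rpower_le_contravar q 1 (alpha + INR j) hq ltac:(lra)).
    rewrite Rpower_1 in H0 by lra; pose proof (Rpower_pos q (alpha + INR j)).
    rewrite Rabs_pos_eq; lra.
Qed.

Lemma qpoch_qpow_neq0 (q alpha : R) (k : nat) :
  0 < q < 1 -> (forall k : nat, alpha <> - INR k) -> qpoch (qpow q (RtoC alpha)) q k <> 0%C.
Proof.
  intros hq halpha; destruct (qpoch_qpow_factor_ge q alpha hq halpha) as [m [Hm Hmj]].
  intros E; pose proof (Cmod_qpoch_ge_pow _ q m k ltac:(lra) Hmj).
  rewrite E, Cmod_0 in H; pose proof (pow_lt m k Hm); lra.
Qed.

Lemma qpoch_q_neq0 (q : R) (k : nat) : 0 < q < 1 -> qpoch (RtoC q) q k <> 0%C.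
Proof.
  intros hq E; pose proof (Cmod_qpoch_ge (RtoC q) q k hq).
  rewrite E, Cmod_0, Cmod_R, Rabs_pos_eq in H by lra.
  pose proof (pow_lt (1 - q) k ltac:(lra)); specialize (H ltac:(lra)); lra.
Qed.

Lemma prodR_one_minus_ge (y : nat -> R) (m : nat) :
  (forall j, 0 <= y j <= 1) -> 1 - rsum y m <= prodR (fun j => 1 - y j) m.
Proof.
  intros H; assert (1 - rsum y m <= prodR (fun j => 1 - y j) m <= 1
                    /\ 0 <= prodR (fun j => 1 - y j) m); [| tauto].
  induction m; simpl; [lra |]; specialize (H m); nra.
Qed.

Lemma qpoch_small_ge_half (x q : R) (i : nat) :
  0 < q < 1 -> 0 <= x <= (1 - q) / 2 -> 1 / 2 <= prodR (fun j => 1 - x * q ^ j) i.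
Proof.
  intros hq hx.
  assert (Hy : forall j, 0 <= x * q ^ j <= 1).
  { intros j; pose proof (pow_le q j ltac:(lra)); pose proof (pow_le1 q j ltac:(lra)); nra. }
  pose proof (prodR_one_minus_ge _ i Hy).
  rewrite (rsum_scal x (fun j => q ^ j)) in H.
  pose proof (rsum_geom_le q 0 i ltac:(lra)); simpl in H0.
  assert (x * rsum (fun k => q ^ k) i <= (1 - q) / 2 * (1 / (1 - q))).
  { apply Rmult_le_compat; try lra.
    apply Rmult_le_reg_r with (1 - q); [lra |]; rewrite rsum_geom, Rmult_0_l.
    pose proof (pow_le1 q i ltac:(lra)); lra. }
  replace ((1 - q) / 2 * (1 / (1 - q))) with (1 / 2) in H1 by (field; lra); lra.
Qed.

Lemma qpoch_inf_neq0 (x q : R) :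
  0 < q < 1 -> 0 < x -> (forall j, x * q ^ j <> 1) -> qpoch_inf (RtoC x) q <> 0%C.
Proof.
  intros hq hx hne.
  destruct (pow_lt_1_zero q) with (y := (1 - q) / (2 * x)) as [J HJ].
  { rewrite Rabs_pos_eq; lra. } { apply Rdiv_lt_0_compat; lra. }
  specialize (HJ J (le_n _)); rewrite Rabs_pos_eq in HJ by (apply pow_le; lra).
  assert (HxJ : 0 <= x * q ^ J <= (1 - q) / 2).
  { split; [apply Rmult_le_pos; [lra | apply pow_le; lra] |].
    replace ((1 - q) / 2) with (x * ((1 - q) / (2 * x))) by (field; lra).
    apply Rmult_le_compat_l; lra. }
  set (f j := 1 - x * q ^ j); set (r i := prodR (fun j => f (J + j)%nat) i).
  assert (Er : forall i, r i = prodR (fun j => 1 - x * q ^ J * q ^ j) i).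
  { intros i; apply prodR_ext; intros; unfold f; rewrite pow_add; ring. }
  assert (Hr : forall i, 1 / 2 <= r i) by (intros; rewrite Er; apply qpoch_small_ge_half; auto).
  assert (Hdec : forall i, r (S i) <= r i).
  { intros i; specialize (Hr i); rewrite !Er in *; simpl.
    pose proof (pow_le q i ltac:(lra)); pose proof (pow_le1 q i ltac:(lra)).
    assert (0 <= x * q ^ J * q ^ i) by (apply Rmult_le_pos; lra); nra. }
  destruct (ex_finite_lim_seq_decr r (1 / 2) Hdec Hr) as [lr Hlr].
  assert (Hlr2 : 1 / 2 <= lr)
    by exact (is_lim_seq_le (fun _ => 1 / 2) r (1 / 2) lr Hr (is_lim_seq_const _) Hlr).
  assert (Hp : is_lim_seq (fun k => prodR f k) (prodR f J * lr)).
  { apply (is_lim_seq_incr_n _ J), is_lim_seq_ext with (fun n => prodR f J * r n).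
    - intros n; unfold r; rewrite Nat.add_comm, prodR_add_range; auto.
    - apply is_lim_seq_mult'; [apply is_lim_seq_const | auto]. }
  unfold qpoch_inf; rewrite (C_lim_Ccv _ (RtoC (prodR f J * lr))).
  - intros E; apply RtoC_inj, Rmult_integral in E; destruct E as [E | E]; [| lra].
    revert E; apply prodR_neq0; intros j; unfold f; specialize (hne j); lra.
  - apply (Ccv_ext (fun n => RtoC (prodR f n))); [intros; rewrite qpoch_RtoC; auto |].
    apply Ccv_RtoC; auto.
Qed.

(** * The terminating series and its limit *)

Lemma is_lim_seq_qnum (x : R) : 0 < x < 1 -> is_lim_seq (fun n => qnum x (INR n)) (1 / (1 - x)).
Proof.
  intros hx; unfold qnum.
  apply is_lim_seq_ext with (fun n => (1 - x ^ n) / (1 - x)).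
  { intros n; rewrite Rpower_pow by lra; auto. }
  pose proof (is_lim_seq_minus' _ _ 1 0 (is_lim_seq_const 1) (is_lim_seq_pow0 x ltac:(lra))).
  rewrite Rminus_0_r in H.
  apply is_lim_seq_div'; [auto | apply is_lim_seq_const | lra].
Qed.

Lemma Ccv_qpow_lin (q a0 : R) (b0 : C) :
  0 < q < 1 -> 0 < a0 -> Ccv (fun n => qpow q (RtoC (a0 * INR n) + b0)) 0.
Proof.
  intros hq ha.
  assert (H : is_lim_seq (fun n => Rpower q a0 ^ n * Rpower q (Re b0)) 0).
  { replace 0 with (0 * Rpower q (Re b0)) by ring.
    apply is_lim_seq_mult'; [| apply is_lim_seq_const].
    apply is_lim_seq_pow0; split; [apply Rlt_le, Rpower_pos | apply Rpower_lt1; auto]. }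
  intros e He; destruct (Ccv_RtoC _ _ H e He) as [N HN]; exists N; intros n Hn.
  specialize (HN n Hn); rewrite <- RtoC_minus, Cmod_R, Rminus_0_r in HN.
  replace (qpow q (RtoC (a0 * INR n) + b0) - 0)%C with (qpow q (RtoC (a0 * INR n) + b0)) by ring.
  rewrite Cmod_qpow; destruct b0; simpl; rewrite Rpower_lin by lra.
  rewrite Rabs_pos_eq in HN; auto.
  apply Rmult_le_pos; [apply pow_le |]; apply Rlt_le, Rpower_pos.
Qed.

Lemma eventually_forall_lt (P : nat -> nat -> Prop) (m : nat) :
  (forall j, (j < m)%nat -> exists N, forall n, (N <= n)%nat -> P j n) ->
  exists N, forall n, (N <= n)%nat -> forall j, (j < m)%nat -> P j n.
Proof.
  induction m; intros H; [exists O; intros; lia |].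
  destruct IHm as [N1 H1]; [intros; apply H; lia |].
  destruct (H m) as [N2 H2]; [lia |].
  exists (max N1 N2); intros n Hn j Hj.
  destruct (Nat.eq_dec j m) as [-> | ]; [apply H2 | apply H1]; lia.
Qed.

Lemma prodR_geom_dominated (q K : R) :
  0 < q < 1 -> 0 <= K ->
  exists C0, 0 <= C0 /\ forall k, prodR (fun j => q ^ j * K) k <= C0 * (1 / 2) ^ k.
Proof.
  intros hq hK.
  destruct (pow_lt_1_zero q) with (y := 1 / (2 * (K + 1))) as [J HJ].
  { rewrite Rabs_pos_eq; lra. } { apply Rdiv_lt_0_compat; lra. }
  assert (Hsmall : forall j, (J <= j)%nat -> q ^ j * K <= 1 / 2).
  { intros j Hj; specialize (HJ j Hj); rewrite Rabs_pos_eq in HJ by (apply pow_le; lra).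
    apply Rle_trans with (1 / (2 * (K + 1)) * K); [apply Rmult_le_compat_r; lra |].
    apply Rmult_le_reg_l with (2 * (K + 1)); [lra |]; field_simplify; lra. }
  assert (Hbig : forall j, 0 <= q ^ j * K <= 2 * (K + 1) * (1 / 2)).
  { intros j; pose proof (pow_le q j ltac:(lra)); pose proof (pow_le1 q j ltac:(lra)); nra. }
  (* The first [J] factors are only bounded by [K + 1]; the others by [1/2]. *)
  assert (Hinv : forall k,
    prodR (fun j => q ^ j * K) k <= (2 * (K + 1)) ^ Nat.min k J * (1 / 2) ^ k).
  { induction k; [simpl; lra |].
    assert (0 <= (2 * (K + 1)) ^ Nat.min k J * (1 / 2) ^ k)
      by (apply Rmult_le_pos; apply pow_le; lra).
    simpl prodR; destruct (Nat.lt_ge_cases k J).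
    - replace (Nat.min (S k) J) with (S (Nat.min k J)) by lia.
      apply Rle_trans with ((2 * (K + 1)) ^ Nat.min k J * (1 / 2) ^ k * (2 * (K + 1) * (1 / 2)));
        [apply Rmult_le_compat; try apply prodR_nonneg; intros; apply Hbig || auto | simpl; lra].
    - replace (Nat.min (S k) J) with (Nat.min k J) by lia.
      apply Rle_trans with ((2 * (K + 1)) ^ Nat.min k J * (1 / 2) ^ k * (1 / 2));
        [apply Rmult_le_compat; try apply prodR_nonneg; intros; apply Hbig || auto | simpl; lra]. }
  exists ((2 * (K + 1)) ^ J); split; [apply pow_le; lra |]; intros k.
  eapply Rle_trans; [apply Hinv |]; apply Rmult_le_compat_r; [apply pow_le; lra |].
  apply Rle_pow; [lra | lia].
Qed.

Definition qbinom_sign (q : R) (k : nat) : R := (-1) ^ k * q ^ Nat.div (k * (k - 1)) 2.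

Lemma phi_term_scal (r s : nat) (num den : nat -> C) (q : R) (c z : C) (k : nat) :
  phi_term r s num den q (c * z) k = (phi_term r s num den q c k * z ^ k)%C.
Proof. unfold phi_term; rewrite Cpow_mult_l; unfold Cdiv; ring. Qed.

Section Limit.

Variables (q : R) (s : nat) (alpha : R) (a c : nat -> R) (b d : nat -> C).
Hypothesis hq : 0 < q < 1.
Hypothesis hs : (1 <= s)%nat.
Hypothesis halpha : forall k : nat, alpha <> - INR k.
Hypothesis ha : forall j, (j < s - 1)%nat -> 0 < a j.
Hypothesis hc : forall j, (j < s - 1)%nat -> 0 < c j.

Definition Acoef : R :=
  prodR (fun j => qnum q (a j)) (s - 1) / prodR (fun j => qnum q (c j)) (s - 1).

Definition mu : R := - Acoef * (q - 1) ^ 2 * Rpower q alpha.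

Definition lam (n : nat) : R :=
  Rpower q (INR n + alpha) * prodR (fun j => qnum (Rpower q (c j)) (INR n)) (s - 1)
  / (qnum q (INR n) * prodR (fun j => qnum (Rpower q (a j)) (INR n)) (s - 1)) * (q - 1).

Definition lam_red (n : nat) : R :=
  Rpower q alpha * prodR (fun j => qnum (Rpower q (c j)) (INR n)) (s - 1)
  / (qnum q (INR n) * prodR (fun j => qnum (Rpower q (a j)) (INR n)) (s - 1)) * (q - 1).

Definition num (n i : nat) : C :=
  match i with O => qpow q (- RtoC (INR n)) | S j => qpow q (RtoC (a j * INR n) + b j) end.

Definition den (n i : nat) : C :=
  match i with O => qpow q (RtoC alpha) | S j => qpow q (RtoC (c j * INR n) + d j) end.

Definition term (n k : nat) (z : C) : C :=
  phi_term s s (num n) (den n) q (RtoC (lam n) * z) k.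

Definition term_lim (k : nat) (z : C) : C :=
  phi_term 0 1 (fun _ => 0%C) (fun _ => qpow q (RtoC alpha)) q (RtoC mu * z) k.

Lemma lam_eq (n : nat) : lam n = q ^ n * lam_red n.
Proof. unfold lam, lam_red; rewrite Rpower_plus, Rpower_pow by lra; unfold Rdiv; ring. Qed.

Lemma is_lim_seq_lam_red : is_lim_seq lam_red mu.
Proof.
  assert (Hpa : forall j, (j < s - 1)%nat -> 0 < 1 - Rpower q (a j))
    by (intros j Hj; pose proof (Rpower_lt1 q (a j) hq (ha j Hj)); lra).
  assert (Hpc : forall j, (j < s - 1)%nat -> 0 < 1 - Rpower q (c j))
    by (intros j Hj; pose proof (Rpower_lt1 q (c j) hq (hc j Hj)); lra).
  assert (Hlim : forall x : nat -> R, (forall j, (j < s - 1)%nat -> 0 < x j) ->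
            is_lim_seq (fun n => prodR (fun j => qnum (Rpower q (x j)) (INR n)) (s - 1))
                       (/ prodR (fun j => 1 - Rpower q (x j)) (s - 1))).
  { intros x Hx; rewrite <- prodR_inv.
    apply is_lim_seq_prodR; intros j Hj.
    replace (/ (1 - Rpower q (x j))) with (1 / (1 - Rpower q (x j))) by (unfold Rdiv; ring).
    apply is_lim_seq_qnum; split; [apply Rpower_pos | apply Rpower_lt1; auto]. }
  replace mu with (Rpower q alpha * / prodR (fun j => 1 - Rpower q (c j)) (s - 1)
                   / (1 / (1 - q) * / prodR (fun j => 1 - Rpower q (a j)) (s - 1)) * (q - 1)).
  - unfold lam_red; apply is_lim_seq_mult'; [| apply is_lim_seq_const].
    apply is_lim_seq_div'.
    + apply is_lim_seq_mult'; [apply is_lim_seq_const | apply Hlim; auto].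
    + apply is_lim_seq_mult'; [apply is_lim_seq_qnum; auto | apply Hlim; auto].
    + pose proof (prodR_pos _ _ Hpa); apply Rmult_integral_contrapositive; split;
        apply Rgt_not_eq; [apply Rdiv_lt_0_compat | apply Rinv_0_lt_compat]; lra.
  - unfold mu, Acoef, qnum; rewrite !prodR_div.
    pose proof (prodR_pos _ _ Hpa); pose proof (prodR_pos _ _ Hpc).
    pose proof (pow_lt (1 - q) (s - 1) ltac:(lra)); field; repeat split; lra.
Qed.

Lemma term_eq (n k : nat) (z : C) :
  term n k z =
  (RtoC (prodR (fun j => lam_red n * (q ^ n - q ^ j))%R k)
   * prodC (fun j => qpoch (num n (S j)) q k) (s - 1)
   / (qpoch (qpow q (RtoC alpha)) q k * prodC (fun j => qpoch (den n (S j)) q k) (s - 1))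
   * RtoC (qbinom_sign q k) * z ^ k / qpoch (RtoC q) q k)%C.
Proof.
  assert (Hcore : (qpoch (num n O) q k * RtoC (lam n) ^ k)%C
                  = RtoC (prodR (fun j => lam_red n * (q ^ n - q ^ j)) k)).
  { simpl num; rewrite <- RtoC_opp, qpow_RtoC, qpoch_RtoC, <- RtoC_pow, <- RtoC_mult by lra.
    f_equal; rewrite <- prodR_const, <- prodR_mult; apply prodR_ext; intros j _.
    rewrite lam_eq, Rpower_Ropp, Rpower_pow by lra.
    pose proof (pow_lt q n ltac:(lra)); field; lra. }
  unfold term, phi_term; rewrite !(prodC_pred_l _ s), <- Hcore by auto.
  replace (1 + Z.of_nat s - Z.of_nat s)%Z with 1%Z by lia.
  rewrite powerRZ_1, Cpow_mult_l; unfold qbinom_sign, Cdiv; simpl den; ring.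
Qed.

Lemma term_vanish (n k : nat) (z : C) : (n < k)%nat -> term n k z = 0%C.
Proof.
  intros Hnk; rewrite term_eq, (prodR_eq0 _ k n) by (auto; ring).
  unfold Cdiv; ring.
Qed.

Lemma term_lim_eq (k : nat) (z : C) :
  term_lim k z = (RtoC (qbinom_sign q k * qbinom_sign q k * mu ^ k)%R
                  / qpoch (qpow q (RtoC alpha)) q k * z ^ k / qpoch (RtoC q) q k)%C.
Proof.
  unfold term_lim, phi_term; simpl prodC.
  replace (1 + Z.of_nat 1 - Z.of_nat 0)%Z with 2%Z by reflexivity.
  change (powerRZ ?x 2) with (x ^ 2).
  rewrite Cpow_mult_l, !RtoC_mult, <- RtoC_pow, !Cmult_1_l; unfold qbinom_sign, Cdiv; simpl.
  rewrite !RtoC_mult; ring.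
Qed.

Lemma Ccv_prodC_qpoch_1 (x : nat -> R) (y : nat -> C) (k : nat) :
  (forall j, (j < s - 1)%nat -> 0 < x j) ->
  Ccv (fun n => prodC (fun j => qpoch (qpow q (RtoC (x j * INR n) + y j)) q k) (s - 1)) 1.
Proof.
  intros Hx; rewrite <- (prodC_1 (s - 1)); apply Ccv_prodC; intros j Hj.
  rewrite <- (qpoch_0 q k); apply Ccv_qpoch, Ccv_qpow_lin; auto.
Qed.

Lemma term_cv (k : nat) : Ccv (fun n => term n k 1) (term_lim k 1).
Proof.
  eapply Ccv_ext; [intros n; symmetry; apply term_eq |].
  assert (E : term_lim k 1 =
    (RtoC (prodR (fun j => mu * (0 - q ^ j))%R k) * 1
     / (qpoch (qpow q (RtoC alpha)) q k * 1) * RtoC (qbinom_sign q k) * 1 ^ k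
     / qpoch (RtoC q) q k)%C).
  { assert (Hp : prodR (fun j => mu * (0 - q ^ j)) k = qbinom_sign q k * mu ^ k).
    { rewrite (prodR_ext _ (fun j => -1 * mu * q ^ j)), !prodR_mult, !prodR_const, prodR_pow_id
        by (intros; ring).
      unfold qbinom_sign; ring. }
    rewrite term_lim_eq, Hp, !RtoC_mult, !Cmult_1_r, Cpow_1_l.
    generalize (RtoC (qbinom_sign q k)) (RtoC (mu ^ k)); intros; unfold Cdiv; ring. }
  rewrite E.
  apply Ccv_div; [apply qpoch_q_neq0, hq | | apply Ccv_const].
  apply Ccv_mult; [| apply Ccv_const]; apply Ccv_mult; [| apply Ccv_const].
  apply Ccv_div; [rewrite Cmult_1_r; apply qpoch_qpow_neq0; auto | |].
  - apply Ccv_mult; [| apply (Ccv_prodC_qpoch_1 a b); auto].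
    apply Ccv_RtoC, is_lim_seq_prodR; intros j _.
    apply is_lim_seq_mult'; [apply is_lim_seq_lam_red |].
    apply is_lim_seq_minus'; [apply is_lim_seq_pow0; lra | apply is_lim_seq_const].
  - apply Ccv_mult; [apply Ccv_const | apply (Ccv_prodC_qpoch_1 c d); auto].
Qed.

Lemma term_unif_cv (Rad : R) (k : nat) : unif_cv_disk Rad (fun n => term n k) (term_lim k).
Proof.
  intros e He.
  assert (Hr : 0 < Rabs Rad ^ k + 1) by (pose proof (pow_le (Rabs Rad) k (Rabs_pos _)); lra).
  destruct (term_cv k (e / (Rabs Rad ^ k + 1))) as [N HN]; [apply Rdiv_lt_0_compat; lra |].
  exists N; intros n z Hn Hz; specialize (HN n Hn).
  unfold term, term_lim in *; rewrite !Cmult_1_r in HN; rewrite !phi_term_scal.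
  match goal with |- Cmod (?x * ?w - ?y * ?w) <= _ =>
    replace (x * w - y * w)%C with ((x - y) * w)%C by ring end.
  rewrite Cmod_mult, Cmod_pow.
  assert (Cmod z ^ k <= Rabs Rad ^ k)
    by (apply pow_incr; split; [apply Cmod_ge_0 | eapply Rle_trans; [apply Hz | apply Rle_abs]]).
  apply Rle_trans with (e / (Rabs Rad ^ k + 1) * (Rabs Rad ^ k + 1)); [| right; field; lra].
  apply Rmult_le_compat; try lra; [apply Cmod_ge_0 | apply pow_le, Cmod_ge_0].
Qed.

Lemma params_eventually_bounded :
  exists N, forall n, (N <= n)%nat ->
    Rabs (lam_red n) <= Rabs mu + 1
    /\ forall j, (j < s - 1)%nat -> Cmod (num n (S j)) <= q /\ Cmod (den n (S j)) <= q.
Proof.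
  destruct (Ccv_bounded _ _ (Ccv_RtoC _ _ is_lim_seq_lam_red)) as [N1 H1].
  assert (Hsmall : forall (x : nat -> R) (y : nat -> C) j, 0 < x j ->
            exists N, forall n, (N <= n)%nat -> Cmod (qpow q (RtoC (x j * INR n) + y j)) <= q).
  { intros x y j Hx; destruct (Ccv_qpow_lin q (x j) (y j) hq Hx q ltac:(lra)) as [N HN].
    exists N; intros n Hn; specialize (HN n Hn).
    replace (qpow q (RtoC (x j * INR n) + y j) - 0)%C
      with (qpow q (RtoC (x j * INR n) + y j)) in HN by ring; lra. }
  destruct (eventually_forall_lt (fun j n => Cmod (num n (S j)) <= q /\ Cmod (den n (S j)) <= q)
              (s - 1)) as [N2 H2].
  { intros j Hj; destruct (Hsmall a b j (ha j Hj)) as [Na HNa].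
    destruct (Hsmall c d j (hc j Hj)) as [Nc HNc].
    exists (max Na Nc); intros n Hn; split; [apply HNa | apply HNc]; lia. }
  exists (max N1 N2); intros n Hn; split; [| apply H2; lia].
  specialize (H1 n ltac:(lia)); rewrite !Cmod_R in H1; auto.
Qed.

Lemma Cmod_term_le (n k : nat) (z : C) (m L : R) :
  (k <= n)%nat -> 0 < m -> (forall j, m <= Cmod (1 - qpow q (RtoC alpha) * RtoC (q ^ j))) ->
  Rabs (lam_red n) <= L ->
  (forall j, (j < s - 1)%nat -> Cmod (num n (S j)) <= q /\ Cmod (den n (S j)) <= q) ->
  Cmod (term n k z) <= prodR (fun j => q ^ j * L) k * ((2 ^ k) ^ (s - 1) * Cmod z ^ k)
                       / (m ^ k * ((1 - q) ^ k) ^ (s - 1) * (1 - q) ^ k).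
Proof.
  intros Hkn Hm Hmj HL Hpar; rewrite term_eq; set (r := (s - 1)%nat) in *.
  set (P := prodR (fun j => lam_red n * (q ^ n - q ^ j)) k).
  set (Np := prodC (fun j => qpoch (num n (S j)) q k) r).
  set (D0 := qpoch (qpow q (RtoC alpha)) q k).
  set (Dp := prodC (fun j => qpoch (den n (S j)) q k) r).
  set (Q := qpoch (RtoC q) q k).
  assert (BP : Cmod (RtoC P) <= prodR (fun j => q ^ j * L) k).
  { rewrite Cmod_R; unfold P; rewrite Rabs_prodR; apply prodR_le; intros j Hj.
    pose proof (pow_le q n ltac:(lra)); pose proof (pow_le_pow_le1 q j n ltac:(lra) ltac:(lia)).
    rewrite Rabs_mult, (Rabs_left1 (q ^ n - q ^ j)) by lra.
    pose proof (Rabs_pos (lam_red n)); split; nra. }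
  assert (BN : Cmod Np <= (2 ^ k) ^ r).
  { unfold Np; rewrite Cmod_prodC, <- prodR_const; apply prodR_le; intros j Hj.
    split; [apply Cmod_ge_0 |]; eapply Rle_trans; [apply Cmod_qpoch_le; auto |].
    apply pow_incr; specialize (Hpar j Hj); pose proof (Cmod_ge_0 (num n (S j))); lra. }
  assert (BX : Cmod (RtoC (qbinom_sign q k)) <= 1).
  { rewrite Cmod_R; unfold qbinom_sign.
    rewrite Rabs_mult, pow_1_abs, Rabs_pos_eq, Rmult_1_l by (apply pow_le; lra).
    apply pow_le1; lra. }
  assert (BD0 : m ^ k <= Cmod D0) by (apply Cmod_qpoch_ge_pow; [lra | auto]).
  assert (BDp : ((1 - q) ^ k) ^ r <= Cmod Dp).
  { unfold Dp; rewrite Cmod_prodC; apply prodR_const_le; [apply pow_le; lra |].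
    intros j Hj; apply Cmod_qpoch_ge; auto; apply Hpar; auto. }
  assert (BQ : (1 - q) ^ k <= Cmod Q)
    by (apply Cmod_qpoch_ge; auto; rewrite Cmod_R, Rabs_pos_eq; lra).
  assert (Hq1 : forall i, 0 < (1 - q) ^ i) by (intros; apply pow_lt; lra).
  assert (HD0 : 0 < Cmod D0) by (eapply Rlt_le_trans; [apply pow_lt | apply BD0]; lra).
  assert (HDp : 0 < Cmod Dp) by (eapply Rlt_le_trans; [apply pow_lt, Hq1 | apply BDp]).
  assert (HQ : 0 < Cmod Q) by (eapply Rlt_le_trans; [apply Hq1 | apply BQ]).
  replace (RtoC P * Np / (D0 * Dp) * RtoC (qbinom_sign q k) * z ^ k / Q)%C
    with (RtoC P * (Np * RtoC (qbinom_sign q k) * z ^ k) / (D0 * Dp * Q))%C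
    by (field; repeat split; apply Cmod_gt_0; auto).
  rewrite Cmod_div, !Cmod_mult, Cmod_pow
    by (apply Cmod_gt_0; rewrite !Cmod_mult; repeat apply Rmult_lt_0_compat; auto).
  apply Rmult_div_le_compat; split; auto using Cmod_ge_0.
  - repeat apply Rmult_le_pos; auto using Cmod_ge_0, pow_le.
  - rewrite <- (Rmult_1_r ((2 ^ k) ^ r)).
    repeat apply Rmult_le_compat; auto using Cmod_ge_0, pow_le, Rmult_le_pos, Rle_refl.
  - repeat apply Rmult_lt_0_compat; repeat apply pow_lt; lra.
  - repeat apply Rmult_le_compat; auto; repeat apply Rmult_le_pos; repeat apply pow_le; lra.
Qed.

Lemma term_bound (Rad : R) :
  exists K N0, 0 <= K /\ forall n k z, (N0 <= n)%nat -> Cmod z <= Rad ->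
    Cmod (term n k z) <= prodR (fun j => q ^ j * K) k.
Proof.
  destruct (qpoch_qpow_factor_ge q alpha hq halpha) as [m [Hm Hmj]].
  destruct params_eventually_bounded as [N0 HN0].
  set (L := Rabs mu + 1).
  set (K := L * 2 ^ (s - 1) * Rabs Rad / (m * (1 - q) ^ (s - 1) * (1 - q))).
  assert (HL : 0 <= L) by (unfold L; pose proof (Rabs_pos mu); lra).
  assert (HK : 0 <= K).
  { unfold K, Rdiv; apply Rmult_le_pos.
    - repeat apply Rmult_le_pos; [lra | apply pow_le; lra | apply Rabs_pos].
    - apply Rlt_le, Rinv_0_lt_compat; repeat apply Rmult_lt_0_compat; try apply pow_lt; lra. }
  exists K, N0; split; auto; intros n k z Hn Hz.
  destruct (Nat.le_gt_cases k n) as [Hkn | Hnk].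
  2:{ rewrite term_vanish, Cmod_0 by auto.
      apply prodR_nonneg; intros; apply Rmult_le_pos; [apply pow_le; lra | auto]. }
  destruct (HN0 n Hn) as [HLn Hpar].
  eapply Rle_trans; [apply (Cmod_term_le n k z m L); auto |].
  assert (Cmod z ^ k <= Rabs Rad ^ k).
  { apply pow_incr; split; [apply Cmod_ge_0 | eapply Rle_trans; [apply Hz | apply Rle_abs]]. }
  apply Rle_trans with (prodR (fun j => q ^ j * L) k * ((2 ^ k) ^ (s - 1) * Rabs Rad ^ k)
                        / (m ^ k * ((1 - q) ^ k) ^ (s - 1) * (1 - q) ^ k)).
  { apply Rmult_div_le_compat; repeat split; try lra.
    - apply prodR_nonneg; intros; apply Rmult_le_pos; [apply pow_le |]; lra.
    - repeat apply Rmult_le_pos; repeat apply pow_le; try apply Cmod_ge_0; lra.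
    - apply Rmult_le_compat_l; [repeat apply Rmult_le_pos; repeat apply pow_le; lra | auto].
    - repeat apply Rmult_lt_0_compat; repeat apply pow_lt; lra. }
  right; unfold K; rewrite !prodR_mult, !prodR_const.
  rewrite <- !pow_mult, (Nat.mul_comm k (s - 1)), !pow_mult.
  unfold Rdiv; rewrite !Rpow_mult_distr, !pow_inv, !Rpow_mult_distr, RPow_abs; ring.
Qed.

Theorem phi_ss_unif_cv (Rad : R) :
  unif_cv_disk Rad (fun n z => rphis s s (num n) (den n) q (RtoC (lam n) * z))
    (fun z => rphis 0 1 (fun _ => 0%C) (fun _ => qpow q (RtoC alpha)) q (RtoC mu * z)).
Proof.
  destruct (term_bound Rad) as [K [N0 [HK Hterm]]].
  destruct (prodR_geom_dominated q K hq HK) as [C0 [HC0 Hgeom]].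
  apply (tannery_unif_cv_disk Rad C0 N0 term term_lim HC0).
  - intros n k z Hn Hz; eapply Rle_trans; [apply Hterm | apply Hgeom]; auto.
  - apply term_vanish.
  - apply term_unif_cv.
Qed.

End Limit.

(** * The Bessel form of the limit *)

Lemma principal_prefactor_eq1 (q alpha : R) (w : C) :
  0 < q < 1 -> w <> 0%C ->
  (Cppow w (RtoC ((1 - alpha) / 2)) * qpow (1 - q) (1 - RtoC alpha)
   * Cppow (RtoC (1 - q) * Csqrt w) (RtoC (alpha - 1)))%C = 1%C.
Proof.
  intros hq hw; pose proof (Csqrt_neq0 w hw) as hs.
  assert (h1q : RtoC (1 - q) <> 0%C) by (intros E; apply RtoC_inj in E; lra).
  rewrite !Cppow_neq0 by (auto; apply Cmult_neq_0; auto).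
  unfold qpow; rewrite Clog_scal, Clog_Csqrt, <- !cexp_add by (auto; lra).
  etransitivity; [| apply cexp_0]; f_equal.
  replace ((1 - alpha) / 2) with ((1 - alpha) * (1 / 2)) by field.
  rewrite RtoC_mult, !RtoC_minus; ring.
Qed.

Lemma qpoch_inf_qpow_neq0 (q alpha : R) :
  0 < q < 1 -> (forall k : nat, alpha <> - INR k) -> qpoch_inf (qpow q (RtoC alpha)) q <> 0%C.
Proof.
  intros hq halpha; rewrite qpow_RtoC by lra.
  apply qpoch_inf_neq0; [auto | apply Rpower_pos |]; intros j E.
  destruct (qpoch_qpow_factor_ge q alpha hq halpha) as [m [Hm Hmj]]; specialize (Hmj j).
  rewrite qpow_RtoC, <- RtoC_mult, E in Hmj by lra.
  replace (1 - RtoC 1)%C with (RtoC 0) in Hmj by ring; rewrite Cmod_0 in Hmj; lra.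
Qed.

Lemma qpoch_inf_q_neq0 (q : R) : 0 < q < 1 -> qpoch_inf (RtoC q) q <> 0%C.
Proof.
  intros hq; apply qpoch_inf_neq0; try lra; intros j.
  pose proof (pow_le1 q j ltac:(lra)); pose proof (pow_le q j ltac:(lra)); nra.
Qed.

Theorem phi01_eq_Bessel (q alpha : R) (w : C) :
  0 < q < 1 -> (forall k : nat, alpha <> - INR k) -> w <> 0%C ->
  rphis 0 1 (fun _ => 0%C) (fun _ => qpow q (RtoC alpha)) q
    (- w * RtoC ((q - 1) ^ 2) * qpow q (RtoC alpha))%C
  = (Cppow w (RtoC ((1 - alpha) / 2)) * Gamma_q q (RtoC alpha)
     * Jq2 (RtoC (alpha - 1)) (RtoC (2 * (1 - q)) * Csqrt w) q)%C.
Proof.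
  intros hq halpha hw.
  pose proof (qpoch_inf_q_neq0 q hq); pose proof (qpoch_inf_qpow_neq0 q alpha hq halpha).
  unfold Gamma_q, Jq2.
  replace (RtoC (alpha - 1) + 1)%C with (RtoC alpha) by (rewrite RtoC_minus; ring).
  replace ((RtoC (2 * (1 - q)) * Csqrt w) ^ 2)%C
    with (RtoC (2 * (1 - q)) * RtoC (2 * (1 - q)) * (Csqrt w * Csqrt w))%C by (simpl; ring).
  rewrite Csqrt_sqr by auto.
  replace (- qpow q (RtoC alpha) * (RtoC (2 * (1 - q)) * RtoC (2 * (1 - q)) * w) / 4)%C
    with (- w * RtoC ((q - 1) ^ 2) * qpow q (RtoC alpha))%C
    by (rewrite RtoC_pow, !RtoC_mult, !RtoC_minus; field).
  replace (RtoC (2 * (1 - q)) * Csqrt w / 2)%C with (RtoC (1 - q) * Csqrt w)%C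
    by (rewrite RtoC_mult; field).
  match goal with |- ?S = _ =>
    transitivity ((Cppow w (RtoC ((1 - alpha) / 2)) * qpow (1 - q) (1 - RtoC alpha)
                   * Cppow (RtoC (1 - q) * Csqrt w) (RtoC (alpha - 1))) * S)%C end.
  - rewrite principal_prefactor_eq1 by auto; ring.
  - field; auto.
Qed.

Theorem theorem1 (q : R) (s : nat) (alpha : R) (a c : nat -> R) (b d : nat -> C)
  (hq : 0 < q < 1) (hs : (1 <= s)%nat)
  (halpha : forall k : nat, alpha <> - INR k)
  (ha : forall j : nat, (j < s - 1)%nat -> 0 < a j)
  (hc : forall j : nat, (j < s - 1)%nat -> 0 < c j)
  (hb : forall j : nat, (j < s - 1)%nat -> forall n : nat, (1 <= n)%nat ->
          forall k : nat, a j * INR n + Re (b j) <> - INR k)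
  (hd : forall j : nat, (j < s - 1)%nat -> forall n : nat, (1 <= n)%nat ->
          forall k : nat, c j * INR n + Re (d j) <> - INR k) :
  let A := prodR (fun j => qnum q (a j)) (s - 1)
           / prodR (fun j => qnum q (c j)) (s - 1) in
  let lam (n : nat) :=
    Rpower q (INR n + alpha) * prodR (fun j => qnum (Rpower q (c j)) (INR n)) (s - 1)
    / (qnum q (INR n) * prodR (fun j => qnum (Rpower q (a j)) (INR n)) (s - 1))
    * (q - 1) in
  let num (n : nat) (i : nat) : C :=
    match i with
    | O => qpow q (- RtoC (INR n))
    | S j => qpow q (RtoC (a j * INR n) + b j)
    end in
  let den (n : nat) (i : nat) : C :=
    match i with
    | O => qpow q (RtoC alpha)
    | S j => qpow q (RtoC (c j * INR n) + d j)
    end in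
  let F (z : C) : C :=
    rphis 0 1 (fun _ => 0%C) (fun _ => qpow q (RtoC alpha)) q
      (- RtoC A * z * RtoC ((q - 1) ^ 2) * qpow q (RtoC alpha))%C in
  (* uniform convergence on every compact subset of C (= on every closed disk) *)
  (forall (Rad eps : R), 0 < eps -> exists N : nat, forall n : nat, (N <= n)%nat ->
     forall z : C, Cmod z <= Rad ->
       Cmod (rphis s s (num n) (den n) q (RtoC (lam n) * z) - F z)%C < eps)
  /\
  (forall z : C, z <> 0%C ->
     F z = (Cppow (RtoC A * z) (RtoC ((1 - alpha) / 2)) * Gamma_q q (RtoC alpha)
            * Jq2 (RtoC (alpha - 1)) (RtoC (2 * (1 - q)) * Csqrt (RtoC A * z)) q)%C).
Proof.
  intros A lam num den F.
  assert (EF : forall z, F z = rphis 0 1 (fun _ => 0%C) (fun _ => qpow q (RtoC alpha)) q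
                                 (RtoC (mu q s alpha a c) * z)).
  { intros z; unfold F, mu; f_equal; rewrite qpow_RtoC by lra.
    unfold Acoef; fold A; rewrite !RtoC_mult, RtoC_opp; ring. }
  split.
  - intros Rad eps Heps.
    destruct (phi_ss_unif_cv q s alpha a c b d hq hs halpha ha hc Rad (eps / 2)) as [N HN]; [lra |].
    exists N; intros n Hn z Hz; rewrite EF.
    eapply Rle_lt_trans; [exact (HN n z Hn Hz) | lra].
  - intros z hz.
    assert (HA : 0 < A).
    { unfold A; apply Rdiv_lt_0_compat; apply prodR_pos; intros; apply qnum_pos; auto. }
    unfold F; rewrite <- (phi01_eq_Bessel q alpha (RtoC A * z)) by
      (auto; apply Cmult_neq_0; auto; intros E; apply RtoC_inj in E; lra).
    f_equal; ring.
Qed.
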